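(* Let $R$ be a Hermite ring and $X$ a (commuting) indeterminate over $R$ such that the formal power series ring $R[[X]]$ is a Bézout ring. Then $R[[X]]$ is a Hermite ring.
   Context: A matrix $A$ over a ring admits a diagonal reduction if there are invertible matrices $P,Q$ with $PAQ$ diagonal (i.e. entries $a_{ij}=0$ for $i\neq j$). A ring is right Hermite if every $1\times 2$ matrix over it admits a diagonal reduction (left Hermite: every $2\times 1$ matrix). Here ''Hermite'' means right Hermite. A ring is Bézout if every finitely generated ideal is principal. *)

From HB Require Import structures.
From mathcomp Require Import all_boot all_order all_algebra.
From mathcomp Require Import boolp.
Set Implicit Arguments. Unset Strict Implicit. Unset Printing Implicit Defensive.
Import GRing.Theory.
Local Open Scope ring_scope.

(* Formal power series R[[X]] over a (not necessarily commutative) ring R,   *)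
(* with X a commuting (central) indeterminate: the coefficient sequences     *)
(* with pointwise addition and Cauchy-product multiplication.                *)
Section FPS.
Variable R : nzRingType.

Variant fps := FPS of nat -> R.
Definition fcoef (f : fps) : nat -> R := let: FPS g := f in g.

HB.instance Definition _ := gen_eqMixin fps.
HB.instance Definition _ := gen_choiceMixin fps.

Lemma fpsP (f g : fps) : (forall n, fcoef f n = fcoef g n) -> f = g.
Proof. by case: f g => [f] [g] /= H; congr FPS; apply: funext. Qed.

Definition fps0 := FPS (fun _ => 0).
Definition fps_add f g := FPS (fun n => fcoef f n + fcoef g n).
Definition fps_opp f := FPS (fun n => - fcoef f n).
Definition fps1 := FPS (fun n => if n == 0%N then 1 else 0).
Definition fps_mul f g :=
  FPS (fun i => \sum_(j < i.+1) fcoef f j * fcoef g (i - j)).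

Fact fps_addA : associative fps_add.
Proof. by move=> f g h; apply: fpsP => n /=; rewrite addrA. Qed.
Fact fps_addC : commutative fps_add.
Proof. by move=> f g; apply: fpsP => n /=; rewrite addrC. Qed.
Fact fps_add0 : left_id fps0 fps_add.
Proof. by move=> f; apply: fpsP => n /=; rewrite add0r. Qed.
Fact fps_addN : left_inverse fps0 fps_opp fps_add.
Proof. by move=> f; apply: fpsP => n /=; rewrite addNr. Qed.

HB.instance Definition _ :=
  GRing.isZmodule.Build fps fps_addA fps_addC fps_add0 fps_addN.

Lemma fcoef0 n : fcoef 0 n = 0. Proof. by []. Qed.

Fact fps_mulE f g i :
  fcoef (fps_mul f g) i = \sum_(j < i.+1) fcoef f j * fcoef g (i - j).
Proof. by []. Qed.

Fact fps_mul_rev f g i :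
  fcoef (fps_mul f g) i = \sum_(j < i.+1) fcoef f (i - j) * fcoef g j.
Proof.
rewrite /= (reindex_inj rev_ord_inj) /=.
by apply: eq_bigr => j _; rewrite (sub_ordK j).
Qed.

Fact fps_mulA : associative fps_mul.
Proof.
move=> p q r; apply: fpsP => i; rewrite [RHS]fps_mul_rev [LHS]fps_mulE.
pose coef3 j k := fcoef p j * (fcoef q (i - j - k) * fcoef r k).
transitivity (\sum_(j < i.+1) \sum_(k < i.+1 | (k <= i - j)%N) coef3 j k).
  apply: eq_bigr => j _; rewrite fps_mul_rev big_distrr /=.
  by rewrite (big_ord_narrow_leq (leq_subr _ _)).
rewrite (exchange_big_dep predT) //=; apply: eq_bigr => k _.
transitivity (\sum_(j < i.+1 | (j <= i - k)%N) coef3 j k).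
  apply: eq_bigl => j; rewrite -ltnS -(ltnS j) -!subSn ?leq_ord //.
  by rewrite -subn_gt0 -(subn_gt0 j) -!subnDA addnC.
rewrite (big_ord_narrow_leq (leq_subr _ _)) big_distrl /=.
by apply: eq_bigr => j _; rewrite /coef3 -!subnDA addnC mulrA.
Qed.

Fact fps_mul1 : left_id fps1 fps_mul.
Proof.
move=> p; apply: fpsP => i; rewrite /= big_ord_recl /= mul1r subn0.
by rewrite big1 ?addr0 // => j _; rewrite mul0r.
Qed.

Fact fps_mulr1 : right_id fps1 fps_mul.
Proof.
move=> p; apply: fpsP => i; rewrite fps_mul_rev big_ord_recl /= mulr1 subn0.
by rewrite big1 ?addr0 // => j _; rewrite mulr0.
Qed.

Fact fps_mulDl : left_distributive fps_mul +%R.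
Proof.
move=> p q r; apply: fpsP => i; rewrite /= -big_split.
by apply: eq_bigr => j _; rewrite mulrDl.
Qed.

Fact fps_mulDr : right_distributive fps_mul +%R.
Proof.
move=> p q r; apply: fpsP => i; rewrite /= -big_split.
by apply: eq_bigr => j _; rewrite mulrDr.
Qed.

Fact fps1_neq0 : fps1 != 0.
Proof.
apply/eqP => /(congr1 (fun f => fcoef f 0%N)) /= /eqP.
by rewrite oner_eq0.
Qed.

HB.instance Definition _ := GRing.Zmodule_isNzRing.Build fps
  fps_mulA fps_mul1 fps_mulr1 fps_mulDl fps_mulDr fps1_neq0.

End FPS.

Notation "R [[ 'X' ]]" := (fps R) (at level 2, format "R [[ 'X' ]]").

Definition invertible_mx (R : nzRingType) (n : nat) (P : 'M[R]_n) : Prop :=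
  exists Q : 'M[R]_n, P *m Q = 1%:M /\ Q *m P = 1%:M.

Definition diag_reduction (R : nzRingType) (m n : nat) (A : 'M[R]_(m, n)) : Prop :=
  exists (P : 'M[R]_m) (Q : 'M[R]_n),
    [/\ invertible_mx P, invertible_mx Q &
        forall (i : 'I_m) (j : 'I_n), (i : nat) <> j -> (P *m A *m Q) i j = 0].

Definition right_Hermite (R : nzRingType) : Prop :=
  forall A : 'M[R]_(1, 2), diag_reduction A.

Definition Hermite (R : nzRingType) : Prop := right_Hermite R.

Definition right_Bezout (R : nzRingType) : Prop :=
  forall (n : nat) (s : 'I_n -> R), exists d : R,
    (exists r : 'I_n -> R, d = \sum_(i < n) s i * r i) /\
    (forall i, exists t : R, s i = d * t).

Definition left_Bezout (R : nzRingType) : Prop :=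
  forall (n : nat) (s : 'I_n -> R), exists d : R,
    (exists r : 'I_n -> R, d = \sum_(i < n) r i * s i) /\
    (forall i, exists t : R, s i = t * d).

Definition Bezout (R : nzRingType) : Prop := left_Bezout R /\ right_Bezout R.

From HB Require Import structures.
From mathcomp Require Import all_boot all_order all_algebra.
Set Implicit Arguments. Unset Strict Implicit. Unset Printing Implicit Defensive.
Import GRing.Theory.
Local Open Scope ring_scope.

(* Right Bezoutness gives f = d a, g = d b and d (1 - a x - b y) = 0, so
   (f g) = d (a + e s, b + e t) for all s, t, with e = 1 - a x - b y.  Writing
   a0 for the constant term of a (and so on), the Hermite property of R gives
   (a0 b0) = c (w00 w01) with W invertible; for z = w00 x0 + w01 y0 we have
   c z = a0 x0 + b0 y0, so (c 1; -1 0) (1 -z; 0 1) W is invertible with first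
   row (a0, b0) + e0 (w10, w11).  Finally, a row over R[[X]] agreeing modulo X
   with the first row of an invertible K is itself the first row of an
   invertible matrix: the corrected matrix is T K with T upper triangular,
   whose corner entry has constant term 1 and is therefore a unit of R[[X]].
   Hence (f g) = (d 0) M with M invertible. *)

Section Mx2.
Variable T : nzRingType.

Definition mx2 (a b c d : T) : 'M[T]_2 :=
  \matrix_(i, j) if i == ord0 then (if j == ord0 then a else b)
                 else (if j == ord0 then c else d).

Lemma mx2_eta (M : 'M[T]_2) :
  M = mx2 (M ord0 ord0) (M ord0 ord_max) (M ord_max ord0) (M ord_max ord_max).
Proof.
apply/matrixP => i j; rewrite !mxE.
case: i => [ [|[|i] ] Hi] //; case: j => [ [|[|j] ] Hj] //.
all: by congr (M _ _); exact: val_inj.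
Qed.

Lemma mx2_1 : 1%:M = mx2 1 0 0 1.
Proof.
apply/matrixP => i j; rewrite !mxE.
by case: i => [ [|[|i] ] Hi] //; case: j => [ [|[|j] ] Hj].
Qed.

Lemma add_mx2 a b c d a' b' c' d' :
  mx2 a b c d + mx2 a' b' c' d' = mx2 (a + a') (b + b') (c + c') (d + d').
Proof.
apply/matrixP => i j; rewrite !mxE.
by case: i => [ [|[|i] ] Hi] //; case: j => [ [|[|j] ] Hj].
Qed.

Lemma mul_mx2 a b c d a' b' c' d' :
  mx2 a b c d *m mx2 a' b' c' d' =
  mx2 (a * a' + b * c') (a * b' + b * d') (c * a' + d * c') (c * b' + d * d').
Proof.
apply/matrixP => i j; rewrite !mxE !big_ord_recl big_ord0 !mxE /= addr0.
by case: i => [ [|[|i] ] Hi] //; case: j => [ [|[|j] ] Hj].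
Qed.

Lemma invertible_mxM n (P Q : 'M[T]_n) :
  invertible_mx P -> invertible_mx Q -> invertible_mx (P *m Q).
Proof.
move=> [P' [PP' P'P] ] [Q' [QQ' Q'Q] ]; exists (Q' *m P'); split.
  by rewrite mulmxA -(mulmxA P) QQ' mulmx1 PP'.
by rewrite mulmxA -(mulmxA Q') P'P mulmx1 Q'Q.
Qed.

Lemma invertible_mx2_swap c : invertible_mx (mx2 c 1 (-1) 0).
Proof.
exists (mx2 0 (-1) 1 c); rewrite !mul_mx2 mx2_1.
by rewrite !(mulr0, mul0r, mulr1, mul1r, mulN1r, mulrN1, add0r, addr0)
  ?(addNr, opprK, subrr).
Qed.

Lemma invertible_mx2_triu h h' k :
  h * h' = 1 -> h' * h = 1 -> invertible_mx (mx2 h k 0 1).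
Proof.
move=> hh' h'h; exists (mx2 h' (- (h' * k)) 0 1); rewrite !mul_mx2 mx2_1.
rewrite !(mulr0, mul0r, mulr1, mul1r, add0r, addr0).
by rewrite mulrN mulrA hh' mul1r addNr h'h subrr.
Qed.

End Mx2.

Lemma invertible_mx_map (R S : nzRingType) (f : {rmorphism R -> S}) n (P : 'M[R]_n) :
  invertible_mx P -> invertible_mx (map_mx f P).
Proof. by move=> [Q [PQ QP] ]; exists (map_mx f Q); rewrite -!map_mxM PQ QP map_mx1. Qed.

Lemma diag_reduction_mulmx (R : nzRingType) m n (A D : 'M[R]_(m, n)) (M : 'M[R]_n) :
  invertible_mx M -> (forall (i : 'I_m) (j : 'I_n), (i : nat) <> j -> D i j = 0) ->
  A = D *m M -> diag_reduction A.
Proof.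
move=> [M' [MM' M'M] ] Ddiag ->; exists 1%:M, M'; split.
- by exists 1%:M; rewrite mulmx1.
- by exists M.
by move=> i j ij; rewrite mul1mx -mulmxA MM' mulmx1 Ddiag.
Qed.

Lemma diag_reduction_row2 (R : nzRingType) (A : 'rV[R]_2) (d : R) (M : 'M[R]_2) :
  invertible_mx M -> A ord0 ord0 = d * M ord0 ord0 ->
  A ord0 ord_max = d * M ord0 ord_max -> diag_reduction A.
Proof.
move=> Minv A0 A1.
apply: (diag_reduction_mulmx Minv (D := \row_j if j == ord0 then d else 0)).
  by move=> i j; rewrite (ord1 i) mxE; case: eqP => // ->.
apply/rowP => j; rewrite !mxE big_ord_recl big_ord1 !mxE /= mul0r addr0.
have [->|->] : j = ord0 \/ j = ord_max.
  by case: j => -[|[|//] ] lt_j2; [left | right]; apply: val_inj.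
by rewrite A0.
by rewrite A1.
Qed.

Lemma right_Bezout_pair (S : nzRingType) : right_Bezout S -> forall f g : S,
  exists d a b x y, [/\ f = d * a, g = d * b & d * (1 - a * x - b * y) = 0].
Proof.
move=> bezS f g.
have [d [ [r dE] dvd] ] := bezS 2%N (fun i : 'I_2 => if i == ord0 then f else g).
have [a fE] := dvd ord0; have [b /= gE] := dvd ord_max.
exists d, a, b, (r ord0), (r (lift ord0 ord0)); split => //.
rewrite !mulrBr mulr1 !mulrA -fE -gE {1}dE big_ord_recl big_ord1 /=.
by rewrite addrAC addrK subrr.
Qed.

Section Hermite.
Variables (R : nzRingType) (hermR : Hermite R).

Lemma Hermite_row_factor (a b : R) : exists (c : R) (W : 'M[R]_2),
  [/\ invertible_mx W, a = c * W ord0 ord0 & b = c * W ord0 ord_max].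
Proof.
pose A := \row_(j < 2) if j == ord0 then a else b.
have [P [Q [ [P' [_ P'P] ] [W [QW WQ] ] Zdiag] ] ] := hermR A.
set Z := P *m A *m Q.
have AE : A = P' *m Z *m W.
  by rewrite /Z !mulmxA P'P mul1mx -!mulmxA QW mulmx1.
have Aj j : A ord0 j = (P' *m Z) ord0 ord0 * W ord0 j.
  rewrite AE mxE big_ord_recl big_ord1 [(P' *m Z) _ (lift _ _)]mxE big_ord1.
  by rewrite Zdiag // mulr0 mul0r addr0.
by exists ((P' *m Z) ord0 ord0), W; split; [exists Q | rewrite -Aj mxE..].
Qed.

Lemma Hermite_row_completion (a b x y : R) : exists (K : 'M[R]_2) (p q : R),
  [/\ invertible_mx K, K ord0 ord0 = a + (1 - a * x - b * y) * p
    & K ord0 ord_max = b + (1 - a * x - b * y) * q].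
Proof.
have [c [W [Winv aE bE] ] ] := Hermite_row_factor a b.
set z := W ord0 ord0 * x + W ord0 ord_max * y.
have czE : 1 - c * z = 1 - a * x - b * y.
  by rewrite /z mulrDr !mulrA -aE -bE opprD addrA.
exists (mx2 c 1 (-1) 0 *m mx2 1 (- z) 0 1 *m W), (W ord_max ord0), (W ord_max ord_max).
split.
- apply: invertible_mxM => //; apply: invertible_mxM; first exact: invertible_mx2_swap.
  by apply: (@invertible_mx2_triu _ 1 1); rewrite mulr1.
all: rewrite {1}(mx2_eta W) !mul_mx2 !mxE /=.
all: by rewrite mulr1 mulr0 addr0 mul1r mulrN [_ + 1]addrC -czE ?aE ?bE.
Qed.

End Hermite.

Section PowerSeries.
Variable R : nzRingType.

Definition fpsC (c : R) : R[[X]] := FPS (fun n => if n == 0%N then c else 0).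
Definition cterm (f : R[[X]]) : R := fcoef f 0.

Fact fpsC_is_zmod_morphism : {morph fpsC : x y / x - y}.
Proof. by move=> x y; apply: fpsP => -[|n] //=; rewrite subr0. Qed.

Fact fpsC_is_monoid_morphism : monoid_morphism fpsC.
Proof.
split=> // x y; apply: fpsP => n; rewrite fps_mulE big_ord_recl /= subn0.
rewrite big1 ?addr0 => [|j _]; last by rewrite mul0r.
by case: n => [|n] //=; rewrite mulr0.
Qed.

HB.instance Definition _ := GRing.isZmodMorphism.Build R R[[X]] fpsC
  fpsC_is_zmod_morphism.
HB.instance Definition _ := GRing.isMonoidMorphism.Build R R[[X]] fpsC
  fpsC_is_monoid_morphism.

Fact cterm_is_zmod_morphism : {morph cterm : x y / x - y}.
Proof. by []. Qed.

Fact cterm_is_monoid_morphism : monoid_morphism cterm.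
Proof. by split=> // f g; rewrite /cterm fps_mulE big_ord1. Qed.

HB.instance Definition _ := GRing.isZmodMorphism.Build R[[X]] R cterm
  cterm_is_zmod_morphism.
HB.instance Definition _ := GRing.isMonoidMorphism.Build R[[X]] R cterm
  cterm_is_monoid_morphism.

Arguments cterm : simpl never.

Lemma ctermC c : cterm (fpsC c) = c.
Proof. by []. Qed.

Section RightInverse.
Variable h : nat -> R.

(* [rinv_seq n] lists the first n+1 coefficients of the right inverse of the
   series with coefficients [h] (when [h 0 = 1]); carrying the whole prefix
   makes the course-of-values recursion structural. *)
Fixpoint rinv_seq n : seq R :=
  if n is m.+1 then
    rcons (rinv_seq m) (- \sum_(j < m.+1) h (m.+1 - j) * (rinv_seq m)`_j)
  else [:: 1].

Definition rinv_coef n := (rinv_seq n)`_n.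

Lemma size_rinv_seq n : size (rinv_seq n) = n.+1.
Proof. by elim: n => //= n IHn; rewrite size_rcons IHn. Qed.

Lemma nth_rinv_seq j n m :
  (j <= n)%N -> (n <= m)%N -> (rinv_seq m)`_j = (rinv_seq n)`_j.
Proof.
move=> le_jn; elim: m => [|m IHm]; first by rewrite leqn0 => /eqP ->.
rewrite leq_eqVlt => /predU1P[-> // | lt_nm].
by rewrite /= nth_rcons size_rinv_seq ltnS (leq_trans le_jn lt_nm) IHm.
Qed.

Lemma rinv_coefS n :
  rinv_coef n.+1 = - \sum_(j < n.+1) h (n.+1 - j) * rinv_coef j.
Proof.
rewrite /rinv_coef /= nth_rcons size_rinv_seq ltnn eqxx.
by congr (- _); apply: eq_bigr => j _; rewrite (@nth_rinv_seq j j) // -ltnS.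
Qed.

End RightInverse.

Lemma fps_rinv (f : R[[X]]) : cterm f = 1 -> exists g, f * g = 1.
Proof.
move=> f0; exists (FPS (rinv_coef (fcoef f))); apply: fpsP => -[|n].
  by rewrite fps_mulE big_ord1 /= -/(cterm f) f0 mulr1.
by rewrite fps_mul_rev big_ord_recr /= subnn -/(cterm f) f0 mul1r rinv_coefS addrN.
Qed.

Lemma fps_unit (f : R[[X]]) : cterm f = 1 -> exists g, f * g = 1 /\ g * f = 1.
Proof.
move=> f0; have [g fg] := fps_rinv f0.
have g0 : cterm g = 1 by move/(congr1 cterm): fg; rewrite rmorphM /= f0 mul1r.
have [k gk] := fps_rinv g0.
have fk : f = k by rewrite -[f]mulr1 -gk mulrA fg mul1r.
by exists g; rewrite {2}fk.
Qed.

Lemma lift_completable_row (K : 'M[R[[X]]]_2) (u v : R[[X]]) :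
  invertible_mx K -> cterm u = cterm (K ord0 ord0) ->
  cterm v = cterm (K ord0 ord_max) ->
  exists M : 'M_2, [/\ invertible_mx M, M ord0 ord0 = u & M ord0 ord_max = v].
Proof.
move=> [K' [KK' K'K] ] u0 v0.
set s := u - K ord0 ord0; set t := v - K ord0 ord_max; set D := mx2 s t 0 0.
set h := 1 + (s * K' ord0 ord0 + t * K' ord_max ord0).
set k := s * K' ord0 ord_max + t * K' ord_max ord_max.
have TE : 1%:M + D *m K' = mx2 h k 0 1.
  by rewrite {1}(mx2_eta K') mul_mx2 mx2_1 add_mx2 !(mul0r, add0r, addr0).
have s0 : cterm s = 0 by rewrite rmorphB /= u0 subrr.
have t0 : cterm t = 0 by rewrite rmorphB /= v0 subrr.
have h0 : cterm h = 1 by rewrite !rmorphD !rmorphM /= s0 t0 !mul0r !addr0 rmorph1.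
have [h' [hh' h'h] ] := fps_unit h0.
exists ((1%:M + D *m K') *m K); split.
- by apply: invertible_mxM; [rewrite TE; apply: invertible_mx2_triu hh' h'h | exists K'].
all: rewrite mulmxDl mul1mx -mulmxA K'K mulmx1 !mxE /=.
all: by rewrite addrC subrK.
Qed.

Lemma Hermite_fps_row_completion : Hermite R -> forall a b x y : R[[X]],
  exists (p q : R) (M : 'M[R[[X]]]_2), [/\ invertible_mx M,
    M ord0 ord0 = a + (1 - a * x - b * y) * fpsC p
  & M ord0 ord_max = b + (1 - a * x - b * y) * fpsC q].
Proof.
move=> hermR a b x y; set e := 1 - a * x - b * y.
have [K0 [p [q [K0inv K00 K01] ] ] ] :=
  Hermite_row_completion hermR (cterm a) (cterm b) (cterm x) (cterm y).
set K := map_mx fpsC K0.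
have Kinv : invertible_mx K by exact: invertible_mx_map.
have ctermE (s : R) :
    cterm (e * fpsC s) = (1 - cterm a * cterm x - cterm b * cterm y) * s.
  by rewrite /e rmorphM !rmorphB !rmorphM rmorph1.
have u0 : cterm (a + e * fpsC p) = cterm (K ord0 ord0).
  by rewrite mxE ctermC K00 -ctermE.
have v0 : cterm (b + e * fpsC q) = cterm (K ord0 ord_max).
  by rewrite mxE ctermC K01 -ctermE.
have [M [Minv M0 M1] ] := lift_completable_row Kinv u0 v0.
by exists p, q, M.
Qed.

End PowerSeries.

Theorem proposition3p1 (R : nzRingType) :
  Hermite R -> Bezout (R[[X]]) -> Hermite (R[[X]]).
Proof.
move=> hermR [_ bezR] A.
have [d [a [b [x [y [fE gE de0] ] ] ] ] ] :=
  right_Bezout_pair bezR (A ord0 ord0) (A ord0 ord_max).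
have [p [q [M [Minv M0 M1] ] ] ] := Hermite_fps_row_completion hermR a b x y.
have deK (s t : R[[X]]) : d * (s + (1 - a * x - b * y) * t) = d * s.
  by rewrite mulrDr mulrA de0 mul0r addr0.
by apply: (diag_reduction_row2 (d := d) Minv); rewrite ?M0 ?M1 deK.
Qed.
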